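(* Let $\lambda>0$ and let $\mathcal{H}=L^2(\mathbb{R})$ with orthonormal basis $\{|n\rangle\}_{n\in\mathbb{N}}$ (the eigenvectors of the quantum harmonic oscillator). Let $D\subset\mathcal{H}$ be the linear span of the $|n\rangle$, and let $D\odot D\subset \mathcal{H}\otimes\mathcal{H}$ be the algebraic tensor product. Define on $D$ the operators $a|n\rangle=\lambda\sqrt{n}\,|n-1\rangle$, $a^*|n\rangle=\lambda\sqrt{n+1}\,|n+1\rangle$, $q_1=\frac{1}{\sqrt2}(a+a^* )$, $q_2=\frac{1}{i\sqrt2}(a-a^* )$, and on $D\odot D$ the operator $$L^2=\sum_{\mu=1}^2\big(q_\mu\otimes\mathbb{I}-\mathbb{I}\otimes q_\mu\big)^2 .$$ For unit vectors $\psi,\varphi\in D$, write $\omega_\psi$ for the vector state $\omega_\psi(A)=\langle\psi,A\psi\rangle$, set $$d_{L^2}(\omega_\psi,\omega_\varphi)=\langle \psi\otimes\varphi,\,L^2\,(\psi\otimes\varphi)\rangle,$$ and define the modified quantum length $$d'_L(\omega_\psi,\omega_\varphi)=\sqrt{\Big|\,d_{L^2}(\omega_\psi,\omega_\varphi)-\sqrt{d_{L^2}(\omega_\psi,\omega_\psi)\,d_{L^2}(\omega_\varphi,\omega_\varphi)}\,\Big|}.$$ Then there is no self-adjoint operator $T$ on $\mathcal{H}\otimes\mathcal{H}$ whose domain contains $D\odot D$ such that $$\langle \psi\otimes\varphi,\,T\,(\psi\otimes\varphi)\rangle = d'_L(\omega_\psi,\omega_\varphi)^2$$ for all unit vectors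 $\psi,\varphi\in D$.
   Context: Here $\lambda$ plays the role of the Planck length $\lambda_P$; $a,a^*$ satisfy $[a,a^*]=\lambda^2\mathbb{I}$, and $H=\frac12(q_1^2+q_2^2)$ has eigenvalues $E_m=\lambda^2(m+\frac12)$ on $|m\rangle$. The operator $L^2$ is the square of the length operator $L=\sqrt{\sum_\mu (dq_\mu)^2}$ with $dq_\mu=q_\mu\otimes\mathbb{I}-\mathbb{I}\otimes q_\mu$ of the Moyal (quantum) plane; vector states $\omega_\psi$ are pure states of the algebra of compact operators on $L^2(\mathbb{R})$. *)

From Stdlib Require Import Reals.
From Coquelicot Require Import Coquelicot.

(* H = L^2(R) is modelled, via the orthonormal basis |n>, as l^2(N):
   a vector is its coefficient sequence.  H (x) H is modelled as l^2(N x N)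
   with |m> (x) |n> the basis vector at (m,n). *)
Definition H1 := nat -> C.
Definition H2 := nat -> nat -> C.

Fixpoint csum (f : nat -> C) (N : nat) : C :=
  match N with
  | O => RtoC 0
  | S k => Cplus (csum f k) (f k)
  end.

Definition ip1_part (x y : H1) (N : nat) : C :=
  csum (fun n => Cmult (Cconj (x n)) (y n)) N.
Definition ip1 (x y : H1) : C :=
  (real (Lim_seq (fun N => Re (ip1_part x y N))),
   real (Lim_seq (fun N => Im (ip1_part x y N)))).

Definition ip2_part (x y : H2) (N : nat) : C :=
  csum (fun m => csum (fun n => Cmult (Cconj (x m n)) (y m n)) N) N.
Definition ip2 (x y : H2) : C :=
  (real (Lim_seq (fun N => Re (ip2_part x y N))),
   real (Lim_seq (fun N => Im (ip2_part x y N)))).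

Fixpoint rsum (f : nat -> R) (N : nat) : R :=
  match N with
  | O => 0%R
  | S k => (rsum f k + f k)%R
  end.

Definition l2 (x : H2) : Prop :=
  exists M : R, forall N : nat,
    (rsum (fun m => rsum (fun n => Cmod (x m n) ^ 2) N) N <= M)%R.

Definition H2add (x y : H2) : H2 := fun m n => Cplus (x m n) (y m n).
Definition H2sub (x y : H2) : H2 := fun m n => Cminus (x m n) (y m n).
Definition H2scal (c : C) (x : H2) : H2 := fun m n => Cmult c (x m n).
Definition H2zero : H2 := fun _ _ => RtoC 0.

(* D = linear span of the |n> = finitely supported sequences *)
Definition inD (psi : H1) : Prop := exists N : nat, forall n, (N <= n)%nat -> psi n = RtoC 0.

Definition tens (psi phi : H1) : H2 := fun m n => Cmult (psi m) (phi n).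

(* algebraic tensor product D (.) D = finite sums of psi (x) phi, psi, phi in D *)
Definition inDD (F : H2) : Prop :=
  exists (K : nat) (ps qs : nat -> H1),
    (forall k, (k < K)%nat -> inD (ps k) /\ inD (qs k)) /\
    forall m n, F m n = csum (fun k => tens (ps k) (qs k) m n) K.

Definition a_op (lam : R) (psi : H1) : H1 :=
  fun n => Cmult (RtoC (lam * sqrt (INR (S n)))) (psi (S n)).
Definition adag_op (lam : R) (psi : H1) : H1 :=
  fun n => match n with
           | O => RtoC 0
           | S k => Cmult (RtoC (lam * sqrt (INR (S k)))) (psi k)
           end.
Definition Ci : C := (0%R, 1%R).
Definition q1 (lam : R) (psi : H1) : H1 :=
  fun n => Cmult (Cinv (RtoC (sqrt 2))) (Cplus (a_op lam psi n) (adag_op lam psi n)).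
Definition q2 (lam : R) (psi : H1) : H1 :=
  fun n => Cmult (Cinv (Cmult Ci (RtoC (sqrt 2))))
                 (Cminus (a_op lam psi n) (adag_op lam psi n)).

Definition opL (q : H1 -> H1) (F : H2) : H2 := fun m n => q (fun m' => F m' n) m.
Definition opR (q : H1 -> H1) (F : H2) : H2 := fun m n => q (F m) n.
Definition dq (q : H1 -> H1) (F : H2) : H2 := H2sub (opL q F) (opR q F).

Definition L2op (lam : R) (F : H2) : H2 :=
  H2add (dq (q1 lam) (dq (q1 lam) F)) (dq (q2 lam) (dq (q2 lam) F)).

(* d_{L^2}(omega_psi, omega_phi) = <psi(x)phi, L^2 psi(x)phi>  (a real number;
   we take its real part, the imaginary part being 0 as L^2 is symmetric) *)
Definition dL2 (lam : R) (psi phi : H1) : R :=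
  Re (ip2 (tens psi phi) (L2op lam (tens psi phi))).

Definition dprime (lam : R) (psi phi : H1) : R :=
  sqrt (Rabs (dL2 lam psi phi - sqrt (dL2 lam psi psi * dL2 lam phi phi))).

Definition selfadjoint (dom : H2 -> Prop) (T : H2 -> H2) : Prop :=
  (forall x, dom x -> l2 x /\ l2 (T x)) /\
  dom H2zero /\
  (forall x y, dom x -> dom y -> dom (H2add x y) /\ T (H2add x y) = H2add (T x) (T y)) /\
  (forall c x, dom x -> dom (H2scal c x) /\ T (H2scal c x) = H2scal c (T x)) /\
  (forall y, l2 y -> forall eps, 0 < eps ->
     exists x, dom x /\ Re (ip2 (H2sub x y) (H2sub x y)) < eps) /\
  (* T = T^* : symmetric, and dom(T^* ) is contained in dom T *)
  (forall x y, dom x -> dom y -> ip2 y (T x) = ip2 (T y) x) /\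
  (forall y z, l2 y -> l2 z -> (forall x, dom x -> ip2 y (T x) = ip2 z x) -> dom y).

From Stdlib Require Import Reals Lra Lia Psatz FunctionalExtensionality.
From Coquelicot Require Import Coquelicot.
Open Scope R_scope.

(* For any linear T, the map (c, s) |-> <psi (x) |0>, T (psi (x) |0>)> with psi = c|0> + s|1>
   is a real quadratic form in (c, s), so its values satisfy the parallelogram identity
   f(1,0) + f(0,1) = f(r,r) + f(r,-r) for r^2 = 1/2.  On unit vectors, however,
   d'_L(omega_psi, omega_|0>)^2 = 2 lam^2 g(s^2) with g(t) = 1 + t - sqrt (1 + 2 t^2),
   and g(0) + g(1) = 2 g(1/2) would force sqrt 6 = 1 + sqrt 3. *)

Lemma csum_ext f g N : (forall k, (k < N)%nat -> f k = g k) -> csum f N = csum g N.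
Proof.
  induction N as [|N IH]; intros Hfg; simpl; auto.
  rewrite IH by (intros; apply Hfg; lia); now rewrite Hfg by lia.
Qed.

Lemma csum_eventually_zero f K N : (K <= N)%nat ->
  (forall k, (K <= k)%nat -> f k = RtoC 0) -> csum f N = csum f K.
Proof.
  induction N as [|N IH]; intros HKN Hf.
  - now replace K with 0%nat by lia.
  - destruct (Nat.eq_dec K (S N)) as [->|HK]; auto.
    simpl; rewrite IH by (auto; lia); rewrite Hf by lia; apply Cplus_0_r.
Qed.

Lemma csum_zero f N : (forall k, f k = RtoC 0) -> csum f N = RtoC 0.
Proof.
  intros Hf; induction N as [|N IH]; simpl; auto.
  rewrite IH, Hf; apply Cplus_0_r.
Qed.

Lemma real_Lim_seq_eventually_const (u : nat -> R) K :
  (forall N, (K <= N)%nat -> u N = u K) -> real (Lim_seq u) = u K.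
Proof.
  intros Hu; rewrite (Lim_seq_ext_loc u (fun _ => u K)), Lim_seq_const; auto.
  now exists K.
Qed.

Lemma Cconj_mult_zero_l z : Cmult (Cconj (RtoC 0)) z = RtoC 0.
Proof. unfold Cconj, Cmult, RtoC; simpl; f_equal; ring. Qed.

Lemma ip1_finite_support x y K : (forall m, (K <= m)%nat -> x m = RtoC 0) ->
  ip1 x y = ip1_part x y K.
Proof.
  intros Hx.
  assert (Hpart : forall N, (K <= N)%nat -> ip1_part x y N = ip1_part x y K).
  { intros N HN; apply csum_eventually_zero; auto.
    intros k Hk; rewrite Hx by exact Hk; apply Cconj_mult_zero_l. }
  unfold ip1; rewrite !(real_Lim_seq_eventually_const _ K)
    by (intros N HN; now rewrite Hpart).
  now destruct (ip1_part x y K).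
Qed.

Lemma ip2_finite_support x y K :
  (forall m n, (K <= m)%nat \/ (K <= n)%nat -> x m n = RtoC 0) ->
  ip2 x y = ip2_part x y K.
Proof.
  intros Hx.
  assert (Hpart : forall N, (K <= N)%nat -> ip2_part x y N = ip2_part x y K).
  { intros N HN; unfold ip2_part.
    rewrite (csum_ext _ (fun m => csum (fun n => Cmult (Cconj (x m n)) (y m n)) K)).
    - apply csum_eventually_zero; auto.
      intros k Hk; apply csum_zero; intros n.
      rewrite Hx by auto; apply Cconj_mult_zero_l.
    - intros m Hm; apply csum_eventually_zero; auto.
      intros n Hn; rewrite Hx by auto; apply Cconj_mult_zero_l. }
  unfold ip2; rewrite !(real_Lim_seq_eventually_const _ K)
    by (intros N HN; now rewrite Hpart).
  now destruct (ip2_part x y K).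
Qed.

Lemma selfadjoint_lincomb dom T a b X Y : selfadjoint dom T -> dom X -> dom Y ->
  T (H2add (H2scal a X) (H2scal b Y)) = H2add (H2scal a (T X)) (H2scal b (T Y)).
Proof.
  intros (_ & _ & Hadd & Hscal & _) HX HY.
  destruct (Hscal a X HX) as [HaX EaX], (Hscal b Y HY) as [HbY EbY].
  destruct (Hadd _ _ HaX HbY) as [_ ->]; now rewrite EaX, EbY.
Qed.

Lemma inDD_tens psi phi : inD psi -> inD phi -> inDD (tens psi phi).
Proof.
  intros Hpsi Hphi; exists 1%nat, (fun _ => psi), (fun _ => phi); split; auto.
  intros m n; simpl; now rewrite Cplus_0_l.
Qed.

Definition vec2 (c s : R) : H1 :=
  fun n => match n with O => RtoC c | S O => RtoC s | _ => RtoC 0 end.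

Definition ket0 : H1 := vec2 1 0.
Definition ket1 : H1 := vec2 0 1.

Lemma vec2_support c s m : (2 <= m)%nat -> vec2 c s m = RtoC 0.
Proof. intros; destruct m as [|[|m]]; auto; lia. Qed.

Lemma inD_vec2 c s : inD (vec2 c s).
Proof. exists 2%nat; apply vec2_support. Qed.

Lemma tens_vec2_support c s c' s' m n : (2 <= m)%nat \/ (2 <= n)%nat ->
  tens (vec2 c s) (vec2 c' s') m n = RtoC 0.
Proof.
  unfold tens; intros [Hm|Hn]; [rewrite vec2_support by exact Hm|rewrite (vec2_support c') by exact Hn];
    unfold Cmult, RtoC; simpl; f_equal; ring.
Qed.

Lemma ip1_vec2 c s : ip1 (vec2 c s) (vec2 c s) = RtoC (c ^ 2 + s ^ 2).
Proof.
  rewrite (ip1_finite_support _ _ 2) by apply vec2_support.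
  unfold ip1_part, csum, vec2, Cmult, Cplus, Cconj, RtoC; simpl; f_equal; ring.
Qed.

Lemma dL2_vec2 lam c s c' s' : dL2 lam (vec2 c s) (vec2 c' s') =
  lam ^ 2 * ((c' ^ 2 + s' ^ 2) * (c ^ 2 + 3 * s ^ 2) + (c ^ 2 + s ^ 2) * (c' ^ 2 + 3 * s' ^ 2)
             - 4 * c * s * c' * s').
Proof.
  unfold dL2; rewrite (ip2_finite_support _ _ 2) by apply tens_vec2_support.
  unfold ip2_part, csum, L2op, H2add, dq, H2sub, opL, opR, q1, q2, a_op, adag_op, tens, vec2.
  cbn -[sqrt INR].
  replace (INR 1) with 1 by (simpl; lra); replace (INR 2) with 2 by (simpl; lra).
  rewrite sqrt_1.
  assert (Hsq : sqrt 2 * sqrt 2 = 2) by (apply sqrt_sqrt; lra).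
  assert (Hnz : sqrt 2 <> 0) by (apply Rgt_not_eq, sqrt_lt_R0; lra).
  replace (sqrt 2 * (sqrt 2 * 1) + 0 * (0 * 1)) with 2 by lra.
  assert (H2 : sqrt 2 ^ 2 = 2) by (simpl; lra).
  assert (Hpow : forall k, sqrt 2 ^ (2 * k) = 2 ^ k) by (intro k; now rewrite pow_mult, H2).
  pose proof (Hpow 2%nat) as H4; pose proof (Hpow 3%nat) as H6; pose proof (Hpow 4%nat) as H8.
  cbn [Nat.mul Nat.add] in H4, H6, H8.
  field_simplify; [|exact Hnz].
  rewrite H2, H4, H6, H8; field.
Qed.

Definition dprime_profile (t : R) : R := 1 + t - sqrt (1 + 2 * t ^ 2).

Lemma dL2_unit_vec2_E0 lam c s : c ^ 2 + s ^ 2 = 1 ->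
  dL2 lam (vec2 c s) ket0 = 2 * lam ^ 2 * (1 + s ^ 2).
Proof. intros Hcs; unfold ket0; rewrite dL2_vec2; nra. Qed.

Lemma dL2_unit_vec2_diag lam c s : c ^ 2 + s ^ 2 = 1 ->
  dL2 lam (vec2 c s) (vec2 c s) = 2 * lam ^ 2 * (1 + 2 * (s ^ 2) ^ 2).
Proof.
  intros Hcs; rewrite dL2_vec2.
  replace (4 * c * s * c * s) with (4 * c ^ 2 * s ^ 2) by ring.
  replace (c ^ 2) with (1 - s ^ 2) by lra; ring.
Qed.

Lemma dprime_sq_unit_vec2_E0 lam c s : c ^ 2 + s ^ 2 = 1 ->
  dprime lam (vec2 c s) ket0 ^ 2 = 2 * lam ^ 2 * dprime_profile (s ^ 2).
Proof.
  intros Hcs; unfold dprime, dprime_profile.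
  rewrite dL2_unit_vec2_E0, dL2_unit_vec2_diag by exact Hcs.
  unfold ket0; rewrite dL2_unit_vec2_diag by ring.
  replace (2 * lam ^ 2 * (1 + 2 * (s ^ 2) ^ 2) * (2 * lam ^ 2 * (1 + 2 * (0 ^ 2) ^ 2)))
    with ((2 * lam ^ 2) ^ 2 * (1 + 2 * (s ^ 2) ^ 2)) by ring.
  rewrite sqrt_mult_alt, sqrt_pow2 by nra.
  assert (Hle : sqrt (1 + 2 * (s ^ 2) ^ 2) <= 1 + s ^ 2).
  { rewrite <- (sqrt_pow2 (1 + s ^ 2)) by nra; apply sqrt_le_1_alt; nra. }
  rewrite pow2_sqrt by apply Rabs_pos; rewrite Rabs_right; [ring|].
  assert (0 <= lam ^ 2) by apply pow2_ge_0; nra.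
Qed.

Lemma dprime_profile_not_affine :
  dprime_profile 0 + dprime_profile 1 <> 2 * dprime_profile (/ 2).
Proof.
  unfold dprime_profile; intros Heq.
  replace (1 + 2 * 0 ^ 2) with 1 in Heq by ring; rewrite sqrt_1 in Heq.
  replace (1 + 2 * 1 ^ 2) with 3 in Heq by ring.
  replace (1 + 2 * (/ 2) ^ 2) with (3 / 2) in Heq by field.
  assert (Hroots : 2 * sqrt (3 / 2) = 1 + sqrt 3) by lra.
  assert (Hsq : 2 * sqrt (3 / 2) * (2 * sqrt (3 / 2)) = (1 + sqrt 3) * (1 + sqrt 3))
    by now rewrite Hroots.
  pose proof (sqrt_sqrt 3 ltac:(lra)) as H3; pose proof (sqrt_sqrt (3 / 2) ltac:(lra)).
  assert (Hone : sqrt 3 = 1) by nra.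
  rewrite Hone in H3; lra.
Qed.

Lemma tens_vec2_E0_lincomb c s : tens (vec2 c s) ket0 =
  H2add (H2scal (RtoC c) (tens ket0 ket0)) (H2scal (RtoC s) (tens ket1 ket0)).
Proof.
  apply functional_extensionality; intro m; apply functional_extensionality; intro n.
  destruct m as [|[|m]], n as [|[|n]];
    unfold tens, ket0, ket1, vec2, H2add, H2scal, Cmult, Cplus, RtoC; simpl; f_equal; ring.
Qed.

Lemma Re_ip2_tens_vec2_E0 c s (U V : H2) :
  Re (ip2 (tens (vec2 c s) ket0) (H2add (H2scal (RtoC c) U) (H2scal (RtoC s) V))) =
  c ^ 2 * Re (U 0%nat 0%nat) + c * s * (Re (V 0%nat 0%nat) + Re (U 1%nat 0%nat))
  + s ^ 2 * Re (V 1%nat 0%nat).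
Proof.
  rewrite (ip2_finite_support _ _ 2) by apply tens_vec2_support.
  unfold ip2_part, csum, tens, ket0, vec2, H2add, H2scal, Cmult, Cplus, Cconj, RtoC, Re; simpl.
  ring.
Qed.

Lemma selfadjoint_form_on_vec2_E0 dom T : selfadjoint dom T -> (forall F, inDD F -> dom F) ->
  exists u w v, forall c s,
    Re (ip2 (tens (vec2 c s) ket0) (T (tens (vec2 c s) ket0))) = c ^ 2 * u + c * s * w + s ^ 2 * v.
Proof.
  intros HT HDD.
  set (X := tens ket0 ket0); set (Y := tens ket1 ket0).
  exists (Re (T X 0%nat 0%nat)), (Re (T Y 0%nat 0%nat) + Re (T X 1%nat 0%nat)),
         (Re (T Y 1%nat 0%nat)).
  intros c s.
  rewrite tens_vec2_E0_lincomb, selfadjoint_lincomb with (dom := dom);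
    try (apply HDD, inDD_tens; apply inD_vec2); try exact HT.
  rewrite <- tens_vec2_E0_lincomb; apply Re_ip2_tens_vec2_E0.
Qed.

Lemma quadratic_form_parallelogram (f : R -> R -> R) u w v r :
  (forall c s, f c s = c ^ 2 * u + c * s * w + s ^ 2 * v) -> r ^ 2 = / 2 ->
  f 1 0 + f 0 1 = f r r + f r (- r).
Proof.
  intros Hf Hr; rewrite !Hf.
  transitivity (2 * r ^ 2 * (u + v)); [rewrite Hr; field | ring].
Qed.

Theorem mainTheorem1 (lam : R) (hlam : (0 < lam)%R) :
  ~ exists (dom : H2 -> Prop) (T : H2 -> H2),
      selfadjoint dom T /\
      (forall F, inDD F -> dom F) /\
      (forall psi phi : H1, inD psi -> inD phi ->
         ip1 psi psi = RtoC 1 -> ip1 phi phi = RtoC 1 ->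
         ip2 (tens psi phi) (T (tens psi phi)) = RtoC (dprime lam psi phi ^ 2)).
Proof.
  intros (dom & T & HT & HDD & Hval).
  set (f c s := Re (ip2 (tens (vec2 c s) ket0) (T (tens (vec2 c s) ket0)))).
  assert (Hunit : forall c s, c ^ 2 + s ^ 2 = 1 ->
                    f c s = 2 * lam ^ 2 * dprime_profile (s ^ 2)).
  { intros c s Hcs; unfold f.
    rewrite Hval; try apply inD_vec2.
    - simpl; now apply dprime_sq_unit_vec2_E0.
    - now rewrite ip1_vec2, Hcs.
    - unfold ket0; rewrite ip1_vec2; f_equal; ring. }
  destruct (selfadjoint_form_on_vec2_E0 dom T HT HDD) as (u & w & v & Hform).
  set (r := sqrt (/ 2)).
  assert (Hr : r ^ 2 = / 2) by (apply pow2_sqrt; lra).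
  pose proof (quadratic_form_parallelogram f u w v r Hform Hr) as Hpar.
  rewrite !Hunit in Hpar by (rewrite ?Hr; nra).
  replace ((- r) ^ 2) with (r ^ 2) in Hpar by ring.
  rewrite Hr in Hpar; replace (0 ^ 2) with 0 in Hpar by ring; replace (1 ^ 2) with 1 in Hpar by ring.
  apply dprime_profile_not_affine.
  assert (0 < lam ^ 2) by (apply pow_lt; exact hlam).
  nra.
Qed.
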